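(* Let $n\ge 2$ and consider Tower of Hanoi on three pegs with $n$ disks, starting from the initial position (all $n$ disks on Peg 1). For every position $P$ of the $n$ disks on the three pegs, there is a finite sequence of legal moves of odd length, in which no two consecutive moves move the same disk, that transforms the initial position into $P$. Equivalently, in the two-player setting described in the context (players alternating, a player may not move the disk just moved by the opponent), the first player can force play to reach any position $P$ after an odd number of moves.
   Context: Tower of Hanoi on three pegs (labeled 1, 2, 3) with $n$ disks of pairwise distinct sizes: a position is an assignment of each disk to a peg, the disks on each peg being stacked with sizes decreasing from bottom to top. A legal move transfers the top disk of one peg to a different peg that is empty or whose top disk is larger. Here, sequences of legal moves are considered without any restriction on intermediate positions (in particular, intermediate positions may have all disks on one peg), except that no disk may be moved in two consecutive moves. *)

From mathcomp Require Import all_boot.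
Set Implicit Arguments. Unset Strict Implicit. Unset Printing Implicit Defensive.

(* Disks are 'I_n, disk i having size i (so smaller index = smaller disk).
   Pegs are 'I_3: peg 1 = ord 0, peg 2 = ord 1, peg 3 = ord 2.
   A position assigns each disk to a peg; the stacking order on each peg is
   forced (sizes decreasing from bottom to top). *)
Definition position (n : nat) := {ffun 'I_n -> 'I_3}.

Definition init_pos (n : nat) : position n := [ffun _ => (ord0 : 'I_3)].

(* Moving disk d to peg q is legal in position P iff d is the top disk of
   its peg (no smaller disk on the same peg), q is a different peg, and q is
   empty or its top disk is larger than d (no smaller disk on q). *)
Definition legal_move n (P : position n) (d : 'I_n) (q : 'I_3) : bool :=
  (P d != q) && [forall e : 'I_n, (e < d) ==> ((P e != P d) && (P e != q))].

Definition do_move n (P : position n) (d : 'I_n) (q : 'I_3) : position n :=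
  [ffun e => if e == d then q else P e].

(* A move is a pair (disk moved, destination peg). [valid_seq P last ms]:
   ms is a sequence of legal moves from P in which no disk is moved in two
   consecutive moves ([last] is the disk moved just before, if any). *)
Fixpoint valid_seq n (P : position n) (last : option 'I_n)
    (ms : seq ('I_n * 'I_3)) : bool :=
  match ms with
  | [::] => true
  | (d, q) :: ms' =>
      [&& legal_move P d q, last != Some d & valid_seq (do_move P d q) (Some d) ms']
  end.

Definition run_moves n (P : position n) (ms : seq ('I_n * 'I_3)) : position n :=
  foldl (fun R m => do_move R m.1 m.2) P ms.

From mathcomp Require Import all_boot.
Set Implicit Arguments. Unset Strict Implicit. Unset Printing Implicit Defensive.

(* The claim is proved for a tower on an arbitrary peg a, by induction on the
   number k >= 2 of disks. To reach T with k + 1 disks: if the largest disk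
   stays on a, solve the k smaller disks. Otherwise pick the third peg c,
   move the k smaller disks onto c (odd), move the largest disk to its
   target, and solve the k smaller disks again from c (odd): odd + 1 + odd is
   odd. The largest disk separates the two inner sequences, so the rule
   against moving a disk twice in a row is respected. For two disks the
   claim is checked exhaustively; one disk alone fails, since it can only
   make a single move. *)

Definition tower k (a : 'I_3) : position k := [ffun=> a].

Definition odd_reachable k (a : 'I_3) (T : position k) :=
  exists ms : seq ('I_k * 'I_3),
    [/\ odd (size ms), valid_seq (tower k a) None ms & run_moves (tower k a) ms = T].

Definition last_moved n (l : option 'I_n) (ms : seq ('I_n * 'I_3)) : option 'I_n :=
  last l [seq Some mv.1 | mv <- ms].

Lemma run_moves_cons n (R : position n) (mv : 'I_n * 'I_3) ms :
  run_moves R (mv :: ms) = run_moves (do_move R mv.1 mv.2) ms.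
Proof. by []. Qed.

Lemma run_moves_cat n (R : position n) (ms1 ms2 : seq ('I_n * 'I_3)) :
  run_moves R (ms1 ++ ms2) = run_moves (run_moves R ms1) ms2.
Proof. exact: foldl_cat. Qed.

Lemma valid_seq_cat n (R : position n) l (ms1 ms2 : seq ('I_n * 'I_3)) :
  valid_seq R l (ms1 ++ ms2) =
  valid_seq R l ms1 && valid_seq (run_moves R ms1) (last_moved l ms1) ms2.
Proof. by elim: ms1 R l => [|[d q] ms1 IH] R l //=; rewrite IH !andbA. Qed.

(* The disks of index < m are the m smallest ones; they form an m-disk
   puzzle that the larger disks never obstruct. *)

Section SmallerDisks.
Variables (m n : nat) (h : m <= n).

Local Notation w := (widen_ord h).

Lemma widen_ord_inj : injective w.
Proof. by move=> i j /(congr1 val) /= ij; apply: val_inj. Qed.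

Definition restrict (R : position n) : position m := [ffun i => R (w i)].

Definition lift_moves (ms : seq ('I_m * 'I_3)) : seq ('I_n * 'I_3) :=
  [seq (w mv.1, mv.2) | mv <- ms].

Lemma restrict_tower a : restrict (tower n a) = tower m a.
Proof. by apply/ffunP => i; rewrite !ffunE. Qed.

Lemma legal_move_widen (R : position n) d q :
  legal_move R (w d) q = legal_move (restrict R) d q.
Proof.
rewrite /legal_move ffunE; congr (_ && _).
apply/forallP/forallP => H e; first by have := H (w e); rewrite !ffunE.
apply/implyP => lt_ed; have lt_em : e < m := ltn_trans lt_ed (ltn_ord d).
have := H (Ordinal lt_em); rewrite !ffunE /= lt_ed.
by have -> : w (Ordinal lt_em) = e by apply: val_inj.
Qed.

Lemma restrict_do_move_widen (R : position n) d q :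
  restrict (do_move R (w d) q) = do_move (restrict R) d q.
Proof. by apply/ffunP => i; rewrite !ffunE (inj_eq widen_ord_inj). Qed.

Lemma restrict_do_move_large (R : position n) (d : 'I_n) q :
  m <= d -> restrict (do_move R d q) = restrict R.
Proof.
move=> le_md; apply/ffunP => i; rewrite !ffunE.
by case: eqP => // /(congr1 val) /= E; move: (ltn_ord i); rewrite E ltnNge le_md.
Qed.

Lemma valid_seq_lift ms : forall (R : position n) l l',
  (forall d, l = Some (w d) -> l' = Some d) ->
  valid_seq (restrict R) l' ms -> valid_seq R l (lift_moves ms).
Proof.
elim: ms => [|[d q] ms IH] R l l' hl //= /and3P [legal fresh valid].
rewrite legal_move_widen legal /=; apply/andP; split.
  by apply/eqP => /hl E; rewrite E eqxx in fresh.
apply: (IH _ _ (Some d)); first by move=> d' [/val_inj ->].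
by rewrite restrict_do_move_widen.
Qed.

Lemma restrict_run_lift ms : forall R : position n,
  restrict (run_moves R (lift_moves ms)) = run_moves (restrict R) ms.
Proof.
elim: ms => [|[d q] ms IH] R //.
by have := IH (do_move R (w d) q); rewrite restrict_do_move_widen.
Qed.

Lemma run_lift_large ms (e : 'I_n) : m <= e -> forall R : position n,
  run_moves R (lift_moves ms) e = R e.
Proof.
move=> le_me; elim: ms => [|[d q] ms IH] R //.
apply: etrans (IH _) _; rewrite ffunE; case: eqP => // E.
by move: le_me; rewrite E /= leqNgt ltn_ord.
Qed.

Lemma last_moved_lift ms l (d : 'I_n) :
  m <= d -> l != Some d -> last_moved l (lift_moves ms) != Some d.
Proof.
move=> le_md; elim: ms l => [|[d' q] ms IH] l //= _; apply: IH.
by apply/eqP => -[E]; move: le_md; rewrite -E /= leqNgt ltn_ord.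
Qed.

End SmallerDisks.

Definition third_peg (a b : 'I_3) : 'I_3 :=
  if (ord0 != a) && (ord0 != b) then ord0
  else if (ord_max != a) && (ord_max != b) then ord_max else Ordinal (isT : 1 < 3).

Lemma third_peg_neq a b : (third_peg a b != a) && (third_peg a b != b).
Proof. by case: a b => [[|[|[|?]]] ?] [[|[|[|?]]] ?]. Qed.

Section LargestDisk.
Variable k : nat.

Local Notation h := (leqnSn k).
Local Notation K := (@ord_max k).

Lemma position_eq_restrict (P Q : position k.+1) :
  restrict h P = restrict h Q -> P K = Q K -> P = Q.
Proof.
move=> PQ PQK; apply/ffunP => e; case: (unliftP K e) => [j ->|-> //].
have -> : lift K j = widen_ord h j by apply: val_inj; exact: lift_max.
by have := congr1 (fun R : position k => R j) PQ; rewrite !ffunE.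
Qed.

Lemma legal_move_largest (R : position k.+1) c q :
  restrict h R = tower k c -> R K != q -> c != R K -> c != q ->
  legal_move R K q.
Proof.
move=> Rc RKq cRK cq; rewrite /legal_move RKq /=.
apply/forallP => e; apply/implyP => lt_eK.
have := congr1 (fun R : position k => R (Ordinal lt_eK)) Rc; rewrite !ffunE.
have -> : widen_ord h (Ordinal lt_eK) = e by apply: val_inj.
by move=> ->; rewrite cRK.
Qed.

Hypothesis reach : forall a (T : position k), odd_reachable a T.

Lemma reach_smaller (R : position k.+1) l a (T : position k) :
  restrict h R = tower k a -> (forall j, l != Some (widen_ord h j)) ->
  exists ms, [/\ odd (size ms), valid_seq R l ms,
    l != Some K -> last_moved l ms != Some K,
    restrict h (run_moves R ms) = T & run_moves R ms K = R K].
Proof.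
move=> Ra hl; have [ms [odd_ms valid reached]] := reach a T.
exists (lift_moves h ms); split.
- by rewrite size_map.
- by apply: (valid_seq_lift (l' := None)) => [d /eqP|]; rewrite ?Ra // (negbTE (hl d)).
- exact: last_moved_lift.
- by rewrite restrict_run_lift Ra.
- exact: run_lift_large.
Qed.

Lemma not_some_widen_max (j : 'I_k) : Some K != Some (widen_ord h j).
Proof. by apply/eqP => -[E]; move: (ltn_ord j); rewrite -E ltnn. Qed.

Lemma odd_reachable_succ a (T : position k.+1) : odd_reachable a T.
Proof.
have [stay|move_K] := eqVneq (T K) a.
  have [ms [odd_ms valid _ reached reachedK]] :=
    reach_smaller (l := None) (restrict h T) (restrict_tower h a) (fun _ => isT).
  exists ms; split => //; apply: position_eq_restrict => //.
  by rewrite reachedK stay ffunE.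
set c := third_peg a (T K); have /andP [ca cT] := third_peg_neq a (T K).
have [ms1 [odd1 valid1 fresh1 reached1 reachedK1]] :=
  reach_smaller (l := None) (tower k c) (restrict_tower h a) (fun _ => isT).
have R2c : restrict h (do_move (run_moves (tower k.+1 a) ms1) K (T K)) = tower k c.
  by rewrite restrict_do_move_large.
have [ms3 [odd3 valid3 _ reached3 reachedK3]] :=
  reach_smaller (restrict h T) R2c (@not_some_widen_max).
exists (ms1 ++ (K, T K) :: ms3); split.
- by rewrite size_cat oddD /= odd1 odd3.
- rewrite valid_seq_cat valid1 /= (fresh1 isT) valid3 !andbT.
  have R1K : run_moves (tower k.+1 a) ms1 K = a by rewrite reachedK1 ffunE.
  by apply: (legal_move_largest reached1); rewrite ?R1K // eq_sym.
- rewrite run_moves_cat run_moves_cons; apply: position_eq_restrict => //.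
  by rewrite reachedK3 ffunE eqxx.
Qed.

End LargestDisk.

(* Finite functions do not compute, so the two-disk puzzle is replayed on the
   pair of pegs of the two disks, where the 27 cases are checked by
   evaluation. *)

Definition pegs2 (R : position 2) : 'I_3 * 'I_3 := (R ord0, R ord_max).

Lemma pegs2_tower a : pegs2 (tower 2 a) = (a, a).
Proof. by rewrite /pegs2 !ffunE. Qed.

Lemma ord2_cases (d : 'I_2) : d = ord0 \/ d = ord_max.
Proof. by case: d => [[|[|?]] ?] //; [left | right]; apply: val_inj. Qed.

Lemma pegs2_inj : injective pegs2.
Proof. by move=> P Q [P0 P1]; apply/ffunP => i; case: (ord2_cases i) => ->. Qed.

Definition legal_two (p : 'I_3 * 'I_3) (d : 'I_2) q : bool :=
  if d == ord0 then p.1 != q else [&& p.2 != q, p.1 != p.2 & p.1 != q].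

Definition move_two (p : 'I_3 * 'I_3) (d : 'I_2) q : 'I_3 * 'I_3 :=
  if d == ord0 then (q, p.2) else (p.1, q).

Fixpoint valid_two p (l : option 'I_2) (ms : seq ('I_2 * 'I_3)) : bool :=
  if ms is (d, q) :: ms' then
    [&& legal_two p d q, l != Some d & valid_two (move_two p d q) (Some d) ms']
  else true.

Definition run_two p (ms : seq ('I_2 * 'I_3)) : 'I_3 * 'I_3 :=
  foldl (fun r mv => move_two r mv.1 mv.2) p ms.

Lemma legal_move_two (R : position 2) d q : legal_move R d q = legal_two (pegs2 R) d q.
Proof.
rewrite /legal_move /legal_two; case: (ord2_cases d) => -> /=.
  by apply/andP/idP => [[] // | ?]; split => //; apply/forallP.
congr (_ && _); apply/forallP/andP => [H | [? ?] e].
  by have /andP [? ?] := implyP (H ord0) isT; split; rewrite // eq_sym.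
by apply/implyP; case: (ord2_cases e) => -> //= _; apply/andP.
Qed.

Lemma pegs2_do_move (R : position 2) d q :
  pegs2 (do_move R d q) = move_two (pegs2 R) d q.
Proof. by rewrite /pegs2 /move_two !ffunE; case: (ord2_cases d) => ->. Qed.

Lemma valid_seq_two ms : forall (R : position 2) l,
  valid_seq R l ms = valid_two (pegs2 R) l ms.
Proof. by elim: ms => [|[d q] ms IH] R l //=; rewrite IH legal_move_two pegs2_do_move. Qed.

Lemma pegs2_run_moves ms : forall R : position 2,
  pegs2 (run_moves R ms) = run_two (pegs2 R) ms.
Proof. by elim: ms => [|[d q] ms IH] R //=; rewrite -pegs2_do_move -IH. Qed.

(* Disk 1 can only move to the peg not holding disk 0, so every sequence
   alternates disk 0, disk 1, disk 0, ... *)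
Definition two_disk_moves (a : 'I_3) (t : 'I_3 * 'I_3) : seq ('I_2 * 'I_3) :=
  let: (t0, t1) := t in
  if t1 != a then
    let c := third_peg a t1 in
    if t0 != c then [:: (ord0, c); (ord_max, t1); (ord0, t0)]
    else [:: (ord0, t1); (ord_max, c); (ord0, a); (ord_max, t1); (ord0, c)]
  else if t0 != a then [:: (ord0, t0)]
  else
    let b := third_peg a a in let c := third_peg a b in
    [:: (ord0, b); (ord_max, c); (ord0, a); (ord_max, b); (ord0, c);
        (ord_max, a); (ord0, a)].

Lemma two_disk_moves_correct a t :
  [&& odd (size (two_disk_moves a t)), valid_two (a, a) None (two_disk_moves a t)
    & run_two (a, a) (two_disk_moves a t) == t].
Proof. by case: t a => -[[|[|[|?]]] ?] [[|[|[|?]]] ?] [[|[|[|?]]] ?]; vm_compute. Qed.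

Lemma odd_reachable_two a (T : position 2) : odd_reachable a T.
Proof.
have /and3P [odd_ms valid /eqP reached] := two_disk_moves_correct a (pegs2 T).
exists (two_disk_moves a (pegs2 T)); split => //.
- by rewrite valid_seq_two pegs2_tower.
- by apply: pegs2_inj; rewrite pegs2_run_moves pegs2_tower.
Qed.

Lemma odd_reachable_tower k a (T : position k.+2) : odd_reachable a T.
Proof.
elim: k a T => [|k IH]; [exact: odd_reachable_two | exact: odd_reachable_succ].
Qed.

Theorem theorem1 (n : nat) (hn : 2 <= n) (P : position n) :
  exists ms : seq ('I_n * 'I_3),
    [/\ odd (size ms), valid_seq (init_pos n) None ms & run_moves (init_pos n) ms = P].
Proof.
have [k def_n] : exists k, n = k.+2 by exists n.-2; case: n hn {P} => [|[|n]].
by subst n; exact: odd_reachable_tower.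
Qed.
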